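(* Let $(y_1,y_2,q)\in\widetilde{\mathbb G}_3$ with $|y_2|\le|y_1|$. Then $$\frac{|3y_2-3\bar y_1q|+|y_1y_2-9q|}{9-|y_1|^2}\le\frac{|3y_1-3\bar y_2q|+|y_1y_2-9q|}{9-|y_2|^2}.$$
   Context: $\mathbb D$ is the open unit disc. $\widetilde{\mathbb G}_3=\{(\beta_1+\bar\beta_2q,\ \beta_2+\bar\beta_1q,\ q): q\in\mathbb D,\ \beta_1,\beta_2\in\mathbb C,\ |\beta_1|+|\beta_2|<3\}$. *)

From mathcomp Require Import all_boot all_order all_algebra.
From mathcomp Require Export complex.
Set Implicit Arguments. Unset Strict Implicit. Unset Printing Implicit Defensive.
Import Order.TTheory GRing.Theory Num.Theory.
Local Open Scope ring_scope.
Local Open Scope complex_scope.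

Definition cmod (R : rcfType) (z : R[i]) : R := Normc.normc z.

Definition Gtilde3 (R : rcfType) (y1 y2 q : R[i]) : Prop :=
  cmod q < 1 /\
  exists b1 b2 : R[i], cmod b1 + cmod b2 < 3 /\
    y1 = b1 + (b2^*)%C * q /\ y2 = b2 + (b1^*)%C * q.

From mathcomp Require Import all_boot all_order all_algebra.
From mathcomp Require Import complex ring lra.
Import Order.TTheory GRing.Theory Num.Theory.
Local Open Scope ring_scope.
Local Open Scope complex_scope.

(* Write y1 = b1 + b2^* q, y2 = b2 + b1^* q and put a = |b1|, b = |b2|, r = |q|,
   P = Re (b1 b2 q^* ).  Then 3 y2 - 3 y1^* q = 3 b2 (1 - r^2),
   |y1|^2 = a^2 + b^2 r^2 + 2P, and D = |y1 y2 - 9 q| satisfies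
   L^2 - D^2 = (9 - (a + b)^2) (1 - r^2) (9 - a^2 - b^2 - 2P) >= 0
   for L = 9 - a^2 - b^2 - ab (1 - r^2) - 2P, so D <= L.  After clearing
   denominators, the difference of the two sides is (1 - r^2)(a - b)(3L - (a + b) D),
   which is nonnegative since a + b < 3 and |y2| <= |y1| forces b <= a. *)

Section Modulus.
Context {R : rcfType}.
Implicit Types (x y : R) (z w : R[i]).

Lemma sqr_cmod x y : cmod (x +i* y) ^+ 2 = x ^+ 2 + y ^+ 2.
Proof. by rewrite sqr_sqrtr // addr_ge0 // sqr_ge0. Qed.

Lemma cmod_ge0 z : 0 <= cmod z.
Proof. by case: z => x y; apply: sqrtr_ge0. Qed.

Lemma cmodM z w : cmod (z * w) = cmod z * cmod w.
Proof. exact: Normc.normcM. Qed.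

Lemma cmodJ z : cmod z^* = cmod z.
Proof. by case: z => x y; rewrite /cmod /= sqrrN. Qed.

Lemma cmodD_le z w : cmod (z + w) <= cmod z + cmod w.
Proof. exact: le_normcD. Qed.

Lemma Re_le_cmod z : complex.Re z <= cmod z.
Proof.
case: z => x y /=; rewrite (le_trans (ler_norm x)) // -sqrtr_sqr.
by rewrite ler_wsqrtr // lerDl sqr_ge0.
Qed.

Lemma cmod_eq_sqr z x : 0 <= x -> cmod z ^+ 2 = x ^+ 2 -> cmod z = x.
Proof. by move=> x_ge0 e; apply/eqP; rewrite -(eqrXn2 (n := 2)) ?cmod_ge0 ?e. Qed.

End Modulus.

Section Twisted.
Context {R : rcfType}.
Variables b1 b2 q : R[i].
Local Notation a := (cmod b1).
Local Notation b := (cmod b2).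
Local Notation r := (cmod q).
Local Notation P := (complex.Re (b1 * b2 * q^*)).

Lemma sqr_cmod_twisted :
  cmod (b1 + b2^* * q) ^+ 2 = a ^+ 2 + b ^+ 2 * r ^+ 2 + 2 * P.
Proof.
case: b1 b2 q => [x1 y1] [x2 y2] [s t].
by rewrite !sqr_cmod; simpc; rewrite ?sqr_cmod /=; ring.
Qed.

Lemma cmod_twisted_sub : r <= 1 ->
  cmod (3 * (b2 + b1^* * q) - 3 * (b1 + b2^* * q)^* * q) = 3 * b * (1 - r ^+ 2).
Proof.
move=> r_le1; apply: cmod_eq_sqr.
  by rewrite mulr_ge0 ?mulr_ge0 ?cmod_ge0 // subr_ge0 expr_le1 ?cmod_ge0.
rewrite 2!exprMn; case: b1 b2 q => [x1 y1] [x2 y2] [s t].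
by rewrite !sqr_cmod; simpc; rewrite ?sqr_cmod /=; ring.
Qed.

Lemma sqr_cmod_twisted_prod :
  cmod ((b1 + b2^* * q) * (b2 + b1^* * q) - 9 * q) ^+ 2 =
  (a * b * (1 - r ^+ 2)) ^+ 2 + 4 * P ^+ 2 + (9 - a ^+ 2 - b ^+ 2) ^+ 2 * r ^+ 2
  - 2 * (9 - a ^+ 2 - b ^+ 2) * P * (1 + r ^+ 2).
Proof.
rewrite 2!exprMn; case: b1 b2 q => [x1 y1] [x2 y2] [s t].
by rewrite !sqr_cmod; simpc; rewrite ?sqr_cmod /=; ring.
Qed.

Lemma sqr_cmod_twisted_lt9 : a + b < 3 -> r <= 1 -> cmod (b1 + b2^* * q) ^+ 2 < 9.
Proof.
move=> ab_lt3 r_le1.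
have : cmod (b1 + b2^* * q) < 3.
  rewrite (le_lt_trans (cmodD_le _ _)) // cmodM cmodJ.
  by rewrite (le_lt_trans _ ab_lt3) // lerD2l ler_piMr ?cmod_ge0.
have := cmod_ge0 (b1 + b2^* * q); nra.
Qed.

End Twisted.

Lemma twisted_prod_le {R : realFieldType} {a b r P D : R} :
  0 <= a -> 0 <= b -> 0 <= r -> r < 1 -> a + b < 3 -> P <= a * b * r -> 0 <= D ->
  D ^+ 2 = (a * b * (1 - r ^+ 2)) ^+ 2 + 4 * P ^+ 2
           + (9 - a ^+ 2 - b ^+ 2) ^+ 2 * r ^+ 2
           - 2 * (9 - a ^+ 2 - b ^+ 2) * P * (1 + r ^+ 2) ->
  D <= 9 - a ^+ 2 - b ^+ 2 - a * b * (1 - r ^+ 2) - 2 * P.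
Proof.
move=> a_ge0 b_ge0 r_ge0 r_lt1 ab_lt3 P_le D_ge0 sqr_D.
set s := 1 - r ^+ 2; set L := 9 - a ^+ 2 - b ^+ 2 - a * b * s - 2 * P.
set K := 9 - (a + b) ^+ 2.
have s_gt0 : 0 < s by rewrite subr_gt0 expr_lt1.
have K_gt0 : 0 < K.
  have : (a + b) ^+ 2 < 3 ^+ 2 by rewrite ltrXn2r ?addr_ge0.
  rewrite /K; lra.
have abr_le : a * b * r <= a * b by rewrite ler_piMr ?mulr_ge0 // ltW.
have K_le_L : K <= L.
  have := mulr_ge0 (mulr_ge0 a_ge0 b_ge0) (sqr_ge0 (1 - r)).
  rewrite /K /L /s; lra.
have K_le_N : K <= 9 - a ^+ 2 - b ^+ 2 - 2 * P by rewrite /K; lra.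
have gap : L ^+ 2 - D ^+ 2 = K * s * (9 - a ^+ 2 - b ^+ 2 - 2 * P).
  by rewrite sqr_D /L /K /s; ring.
have : D ^+ 2 <= L ^+ 2.
  by rewrite -subr_ge0 gap !mulr_ge0 ?ltW // (lt_le_trans K_gt0).
by rewrite ler_pXn2r // nnegrE (le_trans (ltW K_gt0)).
Qed.

Lemma twisted_ratio_le {R : realFieldType} {a b r P D : R} :
  0 <= a -> 0 <= b -> 0 <= r -> r < 1 -> a + b < 3 -> 0 <= D ->
  D <= 9 - a ^+ 2 - b ^+ 2 - a * b * (1 - r ^+ 2) - 2 * P ->
  b ^+ 2 + a ^+ 2 * r ^+ 2 + 2 * P <= a ^+ 2 + b ^+ 2 * r ^+ 2 + 2 * P ->
  a ^+ 2 + b ^+ 2 * r ^+ 2 + 2 * P < 9 ->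
  b ^+ 2 + a ^+ 2 * r ^+ 2 + 2 * P < 9 ->
  (3 * b * (1 - r ^+ 2) + D) / (9 - (a ^+ 2 + b ^+ 2 * r ^+ 2 + 2 * P))
  <= (3 * a * (1 - r ^+ 2) + D) / (9 - (b ^+ 2 + a ^+ 2 * r ^+ 2 + 2 * P)).
Proof.
move=> a_ge0 b_ge0 r_ge0 r_lt1 ab_lt3 D_ge0 D_le y_le u_lt9 v_lt9.
set s := 1 - r ^+ 2; set L := 9 - a ^+ 2 - b ^+ 2 - a * b * s - 2 * P.
have s_gt0 : 0 < s by rewrite subr_gt0 expr_lt1.
have b_le_a : b <= a.
  have : 0 <= (a ^+ 2 - b ^+ 2) * s by rewrite /s; lra.
  by rewrite pmulr_lge0 // subr_ge0 ler_pXn2r.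
have DL : (a + b) * D <= 3 * L.
  have := ler_wpM2r D_ge0 (ltW ab_lt3).
  rewrite /L /s; lra.
rewrite ler_pdivrMr ?subr_gt0 // [leRHS]mulrAC ler_pdivlMr ?subr_gt0 // -subr_ge0.
have -> : (3 * a * s + D) * (9 - (a ^+ 2 + b ^+ 2 * r ^+ 2 + 2 * P))
          - (3 * b * s + D) * (9 - (b ^+ 2 + a ^+ 2 * r ^+ 2 + 2 * P))
          = s * (a - b) * (3 * L - (a + b) * D) by rewrite /L /s; ring.
by apply: mulr_ge0; [apply: mulr_ge0; [exact: ltW | rewrite subr_ge0] | rewrite subr_ge0].
Qed.

Theorem mainTheorem15 (R : rcfType) (y1 y2 q : R[i]) :
  Gtilde3 y1 y2 q -> cmod y2 <= cmod y1 ->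
  (cmod (3 * y2 - 3 * (y1^*)%C * q) + cmod (y1 * y2 - 9 * q)) / (9 - cmod y1 ^+ 2)
  <= (cmod (3 * y1 - 3 * (y2^*)%C * q) + cmod (y1 * y2 - 9 * q)) / (9 - cmod y2 ^+ 2).
Proof.
move=> [q_lt1 [b1 [b2 [b_lt3 [-> ->]]]]] y_le.
have r_le1 := ltW q_lt1.
have P_le : complex.Re (b1 * b2 * q^*) <= cmod b1 * cmod b2 * cmod q.
  by rewrite -(cmodJ q) -!cmodM Re_le_cmod.
have u_lt9 := sqr_cmod_twisted_lt9 b1 b2 q b_lt3 r_le1.
have v_lt9 : cmod (b2 + b1^* * q) ^+ 2 < 9.
  by apply: sqr_cmod_twisted_lt9; rewrite // addrC.
rewrite -(ler_pXn2r (n := 2)) ?nnegrE ?cmod_ge0 // in y_le.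
move: y_le u_lt9 v_lt9; rewrite !cmod_twisted_sub // !sqr_cmod_twisted [b2 * b1]mulrC.
move=> y_le u_lt9 v_lt9; apply: twisted_ratio_le => //; rewrite ?cmod_ge0 //.
by apply: twisted_prod_le; rewrite ?cmod_ge0 ?sqr_cmod_twisted_prod.
Qed.
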